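(* Let $R$ and $R'$ be (not necessarily commutative) subrings of a $\mathbb Q$-algebra, let $\Gamma$ be an order of a number field, let $d\ge1$ be an integer and let $\Gamma'=\mathbb Z[d\Gamma]$ be the subring of $\Gamma$ generated by $d\Gamma$. Suppose $dR'\subseteq R$ and $dR\subseteq R'$. Then the number of $\Gamma$-structures on $R$ is at most $|R'/dR'|$ times the number of $\Gamma'$-structures on $R'$.
   Context: For a ring $A$ and a ring $B$, $\operatorname{Hom}(A,B)$ is the set of ring morphisms $A\to B$; the unit group $B^\times$ acts on it by conjugation. An $A$-structure on $B$ is an element of $\operatorname{Hom}(A,B)/B^\times$. *)

From HB Require Import structures.
From mathcomp Require Import all_boot all_order all_algebra all_field.
From mathcomp Require Import classical_sets cardinality.
Set Implicit Arguments. Unset Strict Implicit. Unset Printing Implicit Defensive.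
Import Order.TTheory GRing.Theory.
Local Open Scope ring_scope.
Local Open Scope classical_set_scope.

Definition is_subring (T : pzRingType) (S : set T) : Prop :=
  [/\ S 1,
      (forall x y, S x -> S y -> S (x - y)) &
      (forall x y, S x -> S y -> S (x * y))].

Definition gen_subring (T : pzRingType) (X : set T) : set T :=
  fun x => forall S : set T, is_subring S -> X `<=` S -> S x.

Definition nat_mul_set (T : pzRingType) (d : nat) (X : set T) : set T :=
  [set x *+ d | x in X].

Definition is_order (K : fieldExtType rat) (G : set K) : Prop :=
  is_subring G /\
  exists s : seq K,
    (forall x, G x <-> inIntSpan (in_tuple s) x) /\ (<<s>>%VS = fullv).

(* Hom(G, R): ring morphisms G -> R, represented by functions T -> A
   whose behaviour outside G is irrelevant (it is quotiented out below). *)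
Definition ring_hom_on (T A : pzRingType) (G : set T) (R : set A)
  (f : T -> A) : Prop :=
  [/\ (forall x, G x -> R (f x)),
      f 1 = 1,
      (forall x y, G x -> G y -> f (x + y) = f x + f y) &
      (forall x y, G x -> G y -> f (x * y) = f x * f y)].

Definition conj_by_unit (T A : pzRingType) (G : set T) (R : set A)
  (f g : T -> A) : Prop :=
  exists u v, [/\ R u, R v, u * v = 1, v * u = 1 &
                  forall x, G x -> g x = u * f x * v].

(* The set of G-structures on R: Hom(G, R) / R^x, each orbit being a set. *)
Definition structures (T A : pzRingType) (G : set T) (R : set A)
  : set (set (T -> A)) :=
  [set C | exists f, ring_hom_on G R f /\
       C = [set g | ring_hom_on G R g /\ conj_by_unit G R f g]].

(* The additive quotient R / dR, as the set of its cosets. *)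
Definition quot_classes (A : pzRingType) (R : set A) (d : nat)
  : set (set A) :=
  [set C | exists a, R a /\ C = [set b | R b /\ nat_mul_set d R (b - a)]].

From HB Require Import structures.
From mathcomp Require Import all_boot all_order all_algebra all_field.
From mathcomp Require Import boolp classical_sets functions cardinality.
From Stdlib Require Import ClassicalEpsilon.

Set Implicit Arguments.
Unset Strict Implicit.
Unset Printing Implicit Defensive.
Import GRing.Theory.
Local Open Scope ring_scope.
Local Open Scope classical_set_scope.

(* Restricting a Gamma-structure f on R to Gamma' = Z[d Gamma] lands in R',
   because f (d g) = d f(g) lies in dR, which is contained in R'.  Fix a
   representative h of every R'^x-orbit of Hom(Gamma', R'); then f = w h w^-1
   on Gamma' for some unit w of R', and f is sent to the pair
   (w mod dR', orbit of f on Gamma').  If f1, f2 give the same pair, then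
   u = w2 w1^-1 = 1 + (w2 - w1) w1^-1 and its inverse lie in 1 + dR', which is
   contained in R, and f2 = u f1 u^-1 on Gamma'.  In particular
   d f2(g) = d u f1(g) u^-1 for every g in Gamma, and since d is invertible in
   the Q-algebra, f1 and f2 are conjugate over R. *)

Section Subring.
Variables (T : pzRingType) (S : set T).
Hypothesis subS : is_subring S.

Lemma subring0 : S 0.
Proof. by case: subS => S1 SB _; rewrite -(subrr 1); apply: SB. Qed.

Lemma subringN x : S x -> S (- x).
Proof. by case: (subS) => _ SB _ Sx; rewrite -sub0r; apply: SB => //; apply: subring0. Qed.

Lemma subringD x y : S x -> S y -> S (x + y).
Proof. by case: (subS) => _ SB _ Sx Sy; rewrite -[y]opprK; apply: SB => //; apply: subringN. Qed.

Lemma subringMn x n : S x -> S (x *+ n).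
Proof.
move=> Sx; elim: n => [|n IHn]; first by rewrite mulr0n; apply: subring0.
by rewrite mulrS; apply: subringD.
Qed.

End Subring.

Lemma gen_subring_min (T : pzRingType) (X S : set T) :
  is_subring S -> X `<=` S -> gen_subring X `<=` S.
Proof. by move=> subS XS x; apply. Qed.

Lemma sub_gen_subring (T : pzRingType) (X : set T) : X `<=` gen_subring X.
Proof. by move=> x Xx S _; apply. Qed.

Lemma rat_pmulrnI (A : pzRingType) (Qstr : {rmorphism rat -> A}) d :
  (0 < d)%N -> injective (fun x : A => x *+ d).
Proof.
move=> d_gt0 x y /= xy.
have mulrn_can z : z = Qstr d%:R^-1 * (z *+ d).
  rewrite -[z *+ d]mulr_natl mulrA -[d%:R in X in _ * X * _](rmorph_nat Qstr).
  by rewrite -rmorphM mulVf ?rmorph1 ?mul1r // Num.Theory.pnatr_eq0 -lt0n.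
by rewrite [x]mulrn_can xy -mulrn_can.
Qed.

Section RingHomOn.
Variables (T A : pzRingType) (G : set T) (R : set A) (f : T -> A).
Hypotheses (subG : is_subring G) (hom_f : ring_hom_on G R f).

Lemma hom_onB x y : G x -> G y -> f (x - y) = f x - f y.
Proof.
case: hom_f subG => _ _ fD _ [_ GB _] Gx Gy.
by have := fD _ _ (GB _ _ Gx Gy) Gy; rewrite subrK => ->; rewrite addrK.
Qed.

Lemma hom_on0 : f 0 = 0.
Proof. by case: subG => G1 _ _; rewrite -(subrr 1) hom_onB // subrr. Qed.

Lemma hom_onMn x n : G x -> f (x *+ n) = f x *+ n.
Proof.
case: hom_f => _ _ fD _ Gx; elim: n => [|n IHn]; first by rewrite !mulr0n hom_on0.
by rewrite !mulrS fD ?IHn //; exact: subringMn subG x n Gx.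
Qed.

Lemma subring_hom_preimage (R' : set A) :
  is_subring R' -> is_subring (G `&` f @^-1` R').
Proof.
case: hom_f subG => _ f1 _ fM [G1 GB GM] [R'1 R'B R'M]; split.
- by split; rewrite //= f1.
- by move=> x y [Gx R'x] [Gy R'y]; split; rewrite /= ?hom_onB //; auto.
- by move=> x y [Gx R'x] [Gy R'y]; split; rewrite /= ?fM //; auto.
Qed.

Lemma ring_hom_on_sub (G' : set T) (R' : set A) :
  G' `<=` G -> G' `<=` f @^-1` R' -> ring_hom_on G' R' f.
Proof. by case: hom_f => _ f1 fD fM sG'G fR'; split => // x y /sG'G Gx /sG'G Gy; auto. Qed.

Lemma ring_hom_on_restrict d (R' : set A) :
  is_subring R' -> nat_mul_set d R `<=` R' ->
  ring_hom_on (gen_subring (nat_mul_set d G)) R' f.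
Proof.
move=> subR' sdRR'.
suff sG'GR' : gen_subring (nat_mul_set d G) `<=` G `&` f @^-1` R'.
  by apply: ring_hom_on_sub => x /sG'GR' [].
apply: gen_subring_min; first exact: subring_hom_preimage.
case: hom_f => fR _ _ _ _ [x Gx <-]; split; first exact: subringMn subG x d Gx.
by rewrite /preimage /= hom_onMn //; apply: sdRR'; exists (f x) => //; apply: fR.
Qed.

End RingHomOn.

Section Conjugation.
Variables (T A : pzRingType) (G : set T) (R : set A).
Hypothesis subR : is_subring R.

Lemma conj_by_unit_refl f : conj_by_unit G R f f.
Proof.
by case: subR => R1 _ _; exists 1, 1; split; rewrite ?mulr1 // => x _; rewrite mul1r mulr1.
Qed.

Lemma conj_by_unit_sym f g : conj_by_unit G R f g -> conj_by_unit G R g f.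
Proof.
case=> u [v [Ru Rv uv vu fg]]; exists v, u; split => // x Gx.
by rewrite fg // !mulrA vu mul1r -mulrA vu mulr1.
Qed.

Lemma conj_by_unit_trans f g h :
  conj_by_unit G R f g -> conj_by_unit G R g h -> conj_by_unit G R f h.
Proof.
case: subR => _ _ RM [u [v [Ru Rv uv vu fg]]] [u' [v' [Ru' Rv' uv' vu' gh]]].
exists (u' * u), (v * v'); split; try by apply: RM.
- by rewrite -mulrA (mulrA u) uv mul1r.
- by rewrite -mulrA (mulrA v') vu' mul1r.
- by move=> x Gx; rewrite gh // fg // !mulrA.
Qed.

Definition hom_orbit f := [set g | ring_hom_on G R g /\ conj_by_unit G R f g].

Lemma hom_orbit_eq f g : conj_by_unit G R f g -> hom_orbit f = hom_orbit g.
Proof.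
move=> fg; apply/seteqP; split=> h [hom_h ch]; split => //.
- exact: conj_by_unit_trans (conj_by_unit_sym fg) ch.
- exact: conj_by_unit_trans fg ch.
Qed.

End Conjugation.

Definition orbit_rep (T A : pzRingType) (C : set (T -> A)) : T -> A :=
  epsilon (inhabits (fun=> 0)) C.

Lemma orbit_repP (T A : pzRingType) (C : set (T -> A)) f : C f -> C (orbit_rep C).
Proof. by move=> Cf; apply: epsilon_spec; exists f. Qed.

Lemma structures_orbit_rep (T A : pzRingType) (G : set T) (R : set A) C :
  is_subring R -> structures G R C ->
  ring_hom_on G R (orbit_rep C) /\ C = hom_orbit G R (orbit_rep C).
Proof.
move=> subR [f [hom_f ->]].
have [hom_r fr] : hom_orbit G R f (orbit_rep (hom_orbit G R f)).
  by apply: (orbit_repP (f := f)); split => //; apply: conj_by_unit_refl.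
by split => //; apply: hom_orbit_eq.
Qed.

Definition conjugates_by (T A : pzRingType) (G : set T) (R : set A) (f g : T -> A) u v :=
  [/\ R u, R v, u * v = 1, v * u = 1 & forall x, G x -> g x = u * f x * v].

Definition conjugator (T A : pzRingType) (G : set T) (R : set A) (f g : T -> A) : A :=
  epsilon (inhabits 0) (fun u => exists v, conjugates_by G R f g u v).

Lemma conjugatorP (T A : pzRingType) (G : set T) (R : set A) f g :
  conj_by_unit G R f g -> exists v, conjugates_by G R f g (conjugator G R f g) v.
Proof. exact: epsilon_spec. Qed.

Definition coset (A : pzRingType) (R : set A) d (a : A) : set A :=
  [set b | R b /\ nat_mul_set d R (b - a)].

Lemma coset_eq_mod (A : pzRingType) (R : set A) d a b :
  is_subring R -> R b -> coset R d a = coset R d b -> nat_mul_set d R (b - a).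
Proof.
move=> subR Rb ab; suff [] : coset R d a b by [].
by rewrite ab; split => //; exists 0; rewrite ?subrr ?mul0rn //; apply: subring0 subR.
Qed.

Section StructureCode.
Variables (A : pzRingType) (Qstr : {rmorphism rat -> A}) (R R' : set A).
Variables (T : pzRingType) (G : set T) (d : nat).
Hypotheses (subR : is_subring R) (subR' : is_subring R') (subG : is_subring G).
Hypothesis d_gt0 : (0 < d)%N.
Hypotheses (sdR'R : nat_mul_set d R' `<=` R) (sdRR' : nat_mul_set d R `<=` R').

Local Notation G' := (gen_subring (nat_mul_set d G)).

Lemma unit_ratio_in_subring w1 w1' w2 :
  R' w1' -> w1 * w1' = 1 -> nat_mul_set d R' (w2 - w1) -> R (w2 * w1').
Proof.
move=> R'w1' w1w1' [r R'r rE].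
have -> : w2 * w1' = 1 + (r * w1') *+ d by rewrite -mulrnAl rE mulrBl w1w1' addrC subrK.
apply: (subringD subR); first by case: subR.
by apply: sdR'R; exists (r * w1') => //; case: subR' => _ _; apply.
Qed.

Lemma conj_eq_from_multiples f1 f2 u v :
  ring_hom_on G R f1 -> ring_hom_on G R f2 ->
  (forall x, G x -> f2 (x *+ d) = u * f1 (x *+ d) * v) ->
  forall x, G x -> f2 x = u * f1 x * v.
Proof.
move=> hom_f1 hom_f2 f12 x Gx; apply: (rat_pmulrnI Qstr d_gt0) => /=.
by rewrite -(hom_onMn subG hom_f2) // f12 // (hom_onMn subG hom_f1) // mulrnAr mulrnAl.
Qed.

Definition structure_code (C : set (T -> A)) : set A * set (T -> A) :=
  let f := orbit_rep C in
  let h := orbit_rep (hom_orbit G' R' f) in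
  (coset R' d (conjugator G' R' h f), hom_orbit G' R' f).

Lemma structure_codeP C : structures G R C ->
  let f := orbit_rep C in let h := orbit_rep (hom_orbit G' R' f) in
  [/\ ring_hom_on G R f, C = hom_orbit G R f, ring_hom_on G' R' f &
      exists v, conjugates_by G' R' h f (conjugator G' R' h f) v].
Proof.
move=> SC f h; have [hom_f Cf] := structures_orbit_rep subR SC.
have hom'_f := ring_hom_on_restrict subG hom_f subR' sdRR'.
have [_ fh] : hom_orbit G' R' f h.
  by apply: (orbit_repP (f := f)); split => //; apply: conj_by_unit_refl.
by split => //; apply: conjugatorP; apply: conj_by_unit_sym.
Qed.

Lemma structure_code_fun :
  set_fun (structures G R) (quot_classes R' d `*` structures G' R') structure_code.
Proof.
move=> C SC; have [_ _ hom'_f [_ [R'w _ _ _ _]]] := structure_codeP SC.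
by split; [eexists; split; first exact: R'w | exists (orbit_rep C)].
Qed.

Lemma conj_by_unit_of_code f1 f2 h w1 v1 w2 v2 :
  ring_hom_on G R f1 -> ring_hom_on G R f2 ->
  conjugates_by G' R' h f1 w1 v1 -> conjugates_by G' R' h f2 w2 v2 ->
  coset R' d w1 = coset R' d w2 -> conj_by_unit G R f1 f2.
Proof.
move=> hom_f1 hom_f2 [R'w1 R'v1 w1v1 v1w1 f1E] [R'w2 R'v2 w2v2 v2w2 f2E] eq_coset.
exists (w2 * v1), (w1 * v2); split.
- exact: unit_ratio_in_subring R'v1 w1v1 (coset_eq_mod subR' R'w2 eq_coset).
- exact: unit_ratio_in_subring R'v2 w2v2 (coset_eq_mod subR' R'w1 (esym eq_coset)).
- by rewrite mulrA -(mulrA w2) v1w1 mulr1 w2v2.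
- by rewrite mulrA -(mulrA w1) v2w2 mulr1 w1v1.
apply: conj_eq_from_multiples => // x Gx.
have G'xd : G' (x *+ d) by apply: sub_gen_subring; exists x.
rewrite f1E // f2E // !mulrA -(mulrA w2 v1 w1) v1w1 mulr1.
by rewrite -(mulrA _ v1 w1) v1w1 mulr1.
Qed.

Lemma structure_code_inj : set_inj (structures G R) structure_code.
Proof.
move=> C1 C2 /set_mem SC1 /set_mem SC2 [eq_coset eq_orbit].
have [hom_f1 C1E _ [v1 cf1]] := structure_codeP SC1.
have [hom_f2 C2E _ [v2 cf2]] := structure_codeP SC2.
rewrite eq_orbit in eq_coset cf1; rewrite C1E C2E; apply: (hom_orbit_eq subR).
exact: conj_by_unit_of_code hom_f1 hom_f2 cf1 cf2 eq_coset.
Qed.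

End StructureCode.

Theorem proposition10p8
  (A : pzRingType) (Qstr : {rmorphism rat -> A})
  (R R' : set A) (K : fieldExtType rat) (G : set K) (d : nat) :
  is_subring R -> is_subring R' -> is_order G -> (0 < d)%N ->
  nat_mul_set d R' `<=` R -> nat_mul_set d R `<=` R' ->
  (structures G R #<=
     quot_classes R' d `*` structures (gen_subring (nat_mul_set d G)) R')%card.
Proof.
move=> subR subR' [subG _] d_gt0 sdR'R sdRR'.
apply/pcard_leP/injfunPex; exists (structure_code R' G d).
- exact: structure_code_fun.
- exact: structure_code_inj.
Qed.
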